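(* Let $\Lambda\in\mathbb{R}^{n\times n}$ be diagonal with entries $\lambda_{ii}\in[0,1]$, let $W^{(1)},W^{(2)}\in\mathbb{R}^{n\times n}$ be entrywise nonnegative with $W^{(1)}+W^{(2)}$ row-stochastic, and $s\in\mathbb{R}^n$. Consider the FJ-MM system $$x(t+1)=\Lambda\big(W^{(1)}x(t)+W^{(2)}x(t-1)\big)+(I-\Lambda)s \tag{A}$$ and the comparison FJ system $$x(t+1)=\bar A x(t)+(I-\Lambda)s,\qquad \bar A:=\Lambda\big(W^{(1)}+W^{(2)}\big). \tag{B}$$ The following are equivalent: (i) system (A) is exponentially stable, i.e. $\rho(\bar A_d)<1$ where $\bar A_d:=\begin{pmatrix}0 & I\\ \Lambda W^{(2)} & \Lambda W^{(1)}\end{pmatrix}\in\mathbb{R}^{2n\times 2n}$; (ii) system (B) is exponentially stable, i.e. $\rho(\bar A)<1$; (iii) the set $\hat{\mathcal V}:=\{i:\lambda_{ii}<1\}$ is non-empty and globally reachable in the directed graph $\mathcal G[W^{(1)}+W^{(2)}]$ (in particular this holds if $\lambda_{ii}<1$ for all $i$). Moreover, if (i)–(iii) hold, then $I-\bar A$ is invertible and every solution of (A) (for any initial data $x(-1),x(0)$) and every solution of (B) converges to $$\bar x=(I-\bar A)^{-1}(I-\Lambda)s,$$ which is the unique equilibrium of both systems.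
   Context: $\rho(M)$ denotes the spectral radius. For an entrywise nonnegative $n\times n$ matrix $W=(w_{ij})$, $\mathcal G[W]$ is the directed graph on nodes $\{1,\dots,n\}$ with an edge $(i,j)$ iff $w_{ij}>0$. A set of nodes $S$ is globally reachable if from every node there is a directed walk (possibly of length zero) to some node of $S$. System (A) is equivalent to $y(t)=\bar A_d y(t-1)+\begin{pmatrix}0\\(I-\Lambda)s\end{pmatrix}$ with $y(t-1)=(x(t-1)^\top,x(t)^\top)^\top$. *)

From HB Require Import structures.
From mathcomp Require Import all_boot all_order all_algebra.
From mathcomp Require Import all_classical all_reals all_analysis.
From mathcomp Require complex.
Import complex.ComplexField.
Set Implicit Arguments. Unset Strict Implicit. Unset Printing Implicit Defensive.
Import Order.TTheory GRing.Theory Num.Theory.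
Local Open Scope ring_scope.

Definition complexify (R : realType) (m n : nat) (A : 'M[R]_(m, n))
  : 'M[complex.complex R]_(m, n) :=
  map_mx (fun x : R => complex.Complex x 0) A.

Definition spectral_radius_lt1 (R : realType) (n : nat) (A : 'M[R]_n) : Prop :=
  forall z : complex.complex R, eigenvalue (complexify A) z -> `|z| < 1.

Definition graph_edge (R : realType) (n : nat) (W : 'M[R]_n) : rel 'I_n :=
  fun i j => 0 < W i j.

Definition globally_reachable (R : realType) (n : nat) (W : 'M[R]_n)
  (S : pred 'I_n) : Prop :=
  forall i : 'I_n, exists2 j, S j & connect (graph_edge W) i j.

Definition nonneg_mx (R : realType) (n : nat) (W : 'M[R]_n) : Prop :=
  forall i j, 0 <= W i j.

Definition row_stochastic (R : realType) (n : nat) (W : 'M[R]_n) : Prop :=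
  nonneg_mx W /\ forall i, \sum_j W i j = 1.

Definition FJMM_mx (R : realType) (n : nat) (Lam W1 W2 : 'M[R]_n) : 'M[R]_(n + n) :=
  block_mx 0 1%:M (Lam *m W2) (Lam *m W1).

From HB Require Import structures.
From mathcomp Require Import all_boot all_order all_algebra.
From mathcomp Require Import all_classical all_reals all_analysis.
From mathcomp Require Import complex.
Import Order.TTheory GRing.Theory Num.Theory numFieldNormedType.Exports.
Local Open Scope classical_set_scope.
Local Open Scope ring_scope.

Set Implicit Arguments. Unset Strict Implicit. Unset Printing Implicit Defensive.

(* Write u_k := Abar^k 1.  As Abar is nonnegative with row sums <= 1, 0 <= u_k <= 1 and u_k
   is nonincreasing, and (u_k)_i < 1 as soon as k exceeds the length of a walk from i to a node
   with lambda_ii < 1.  So global reachability gives a power of Abar with all row sums < 1,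
   which bounds every eigenvalue by the maximal-entry argument and drives every trajectory of
   e(k+1) = Abar e(k) to 0.  The two-step matrix Abar_d is nonnegative with row sums <= 1 and
   Abar_d^(2k) 1 <= (u_k, u_k), so the same holds for it; (A) is the first-order system driven
   by Abar_d.  Conversely, if some node cannot reach such a node, the nodes it reaches form a
   closed class on which Abar is row-stochastic; this yields a left fixed vector q of Abar, and
   (q Lam W2, q) is one of Abar_d. *)

Section MatrixEigenvalues.
Variables (F : fieldType) (N : nat).

Lemma eigenvalue_unitmxE (A : 'M[F]_N) a : eigenvalue A a = (A - a%:M \notin unitmx).
Proof. by rewrite /eigenvalue /eigenspace kermx_eq0 row_free_unit. Qed.

Lemma eigenvalue_trmx (A : 'M[F]_N) a : eigenvalue A^T a = eigenvalue A a.
Proof.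
by rewrite !eigenvalue_unitmxE -[_ - _]trmxK linearB /= trmxK tr_scalar_mx unitmx_tr.
Qed.

Lemma eigenvalue_colP (A : 'M[F]_N) a :
  reflect (exists2 x : 'cV_N, A *m x = a *: x & x != 0) (eigenvalue A a).
Proof.
rewrite -eigenvalue_trmx; apply: (iffP eigenvalueP) => -[v Hv v0].
  by exists v^T; rewrite ?trmx_eq0 // -[A]trmxK -trmx_mul Hv linearZ.
by exists v^T; rewrite ?trmx_eq0 // -trmx_mul Hv linearZ.
Qed.

Lemma eigenvectorX (A : 'M[F]_N) a (x : 'cV[F]_N) k :
  A *m x = a *: x -> A ^+ k *m x = a ^+ k *: x.
Proof.
move=> Ax; elim: k => [|k IHk]; first by rewrite !expr0 mul1mx scale1r.
by rewrite exprSr -mulmxE -mulmxA Ax -scalemxAr IHk scalerA -exprS.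
Qed.

Lemma unitmx_1B (A : 'M[F]_N) : ~~ eigenvalue A 1 -> 1%:M - A \in unitmx.
Proof.
rewrite eigenvalue_unitmxE negbK -(unitmxZ _ (unitrN1 F)).
by rewrite scaleN1r opprB.
Qed.

Lemma affine_fixpointE (A : 'M[F]_N) (v z : 'cV[F]_N) :
  1%:M - A \in unitmx -> z = A *m z + v <-> z = invmx (1%:M - A) *m v.
Proof.
move=> unitA; have affineE (y : 'cV[F]_N) : (y == A *m y + v) = ((1%:M - A) *m y == v).
  by rewrite mulmxBl mul1mx subr_eq addrC.
split=> [/eqP | ->]; first by rewrite affineE => /eqP <-; rewrite mulKmx.
by apply/eqP; rewrite affineE mulKVmx.
Qed.

End MatrixEigenvalues.

Lemma col_mx_le (T : numDomainType) m1 m2 (a c : 'cV[T]_m1) (b d : 'cV[T]_m2) i :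
  (forall j, a j 0 <= c j 0) -> (forall j, b j 0 <= d j 0) ->
  col_mx a b i 0 <= col_mx c d i 0.
Proof. by move=> ac bd; case: (split_ordP i) => j ->; rewrite ?col_mxEu ?col_mxEd. Qed.

Lemma exprS_mulmx (T : pzRingType) m (A : 'M[T]_m) k (v : 'cV[T]_m) :
  A ^+ k.+1 *m v = A *m (A ^+ k *m v).
Proof. by rewrite exprS -mulmxE mulmxA. Qed.

Lemma diag_mulmxE (T : pzSemiRingType) m p (D : 'M[T]_m) (B : 'M[T]_(m, p)) i j :
  is_diag_mx D -> (D *m B) i j = D i i * B i j.
Proof.
move=> /is_diag_mxP D0; rewrite mxE (bigD1 i) //= big1 ?addr0 // => k ki.
by rewrite D0 ?mul0r // eq_sym.
Qed.

Lemma norm_mulmx_le (T : numDomainType) N (A : 'M[T]_N) (x : 'cV[T]_N) c i :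
  (forall i j, 0 <= A i j) -> (forall j, `|x j 0| <= c) ->
  `|(A *m x) i 0| <= c * (A *m (const_mx 1 : 'cV[T]_N)) i 0.
Proof.
move=> A0 xc; rewrite !mxE mulr_sumr; apply: le_trans (ler_norm_sum _ _ _) _.
apply: ler_sum => j _; rewrite normrM (ger0_norm (A0 i j)) mxE mulr1 mulrC.
exact: ler_wpM2r.
Qed.

Section NonnegativeMatrices.
Variables (R : realType) (N : nat).
Local Notation ones := (const_mx 1 : 'cV[R]_N).
Local Notation toC := (complex.real_complex R).

Lemma nonneg_mxD (A B : 'M[R]_N) : nonneg_mx A -> nonneg_mx B -> nonneg_mx (A + B).
Proof. by move=> A0 B0 i j; rewrite mxE addr_ge0. Qed.

Lemma nonneg_mxM (A B : 'M[R]_N) : nonneg_mx A -> nonneg_mx B -> nonneg_mx (A *m B).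
Proof. by move=> A0 B0 i j; rewrite mxE sumr_ge0 // => k _; rewrite mulr_ge0. Qed.

Lemma nonneg_mxX (A : 'M[R]_N) k : nonneg_mx A -> nonneg_mx (A ^+ k).
Proof.
move=> A0; elim: k => [|k IHk]; first by move=> i j; rewrite expr0 mxE ler0n.
by rewrite exprS -mulmxE; apply: nonneg_mxM.
Qed.

Lemma nonneg_mulmx_le (A : 'M[R]_N) (x y : 'cV[R]_N) i :
  nonneg_mx A -> (forall j, x j 0 <= y j 0) -> (A *m x) i 0 <= (A *m y) i 0.
Proof. by move=> A0 xy; rewrite !mxE; apply: ler_sum => j _; apply: ler_wpM2l. Qed.

Lemma complexifyX (A : 'M[R]_N) k : complexify (A ^+ k) = complexify A ^+ k.
Proof.
have complexifyE (B : 'M[R]_N) : complexify B = map_mx toC B by [].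
rewrite !complexifyE; elim: k => [|k IHk]; first by rewrite !expr0 map_mx1.
by rewrite !exprS -!mulmxE map_mxM IHk.
Qed.

Lemma spectral_radius_lt1_eigenvalue1 (A : 'M[R]_N) :
  spectral_radius_lt1 A -> ~~ eigenvalue A 1.
Proof.
move=> rhoA; apply/negP; rewrite -(eigenvalue_map toC) rmorph1 => /rhoA.
by rewrite normr1 ltxx.
Qed.

Lemma eigenvalue_norm_lt1 (A : 'M[R]_N) z :
  nonneg_mx A -> (forall i, (A *m ones) i 0 < 1) ->
  eigenvalue (complexify A) z -> `|z| < 1.
Proof.
move=> A0 A1 /eigenvalue_colP [x Ax x0].
have [i xi0] : exists i, x i 0 != 0.
  apply/existsP; apply: contraR x0 => /existsPn xi0; apply/eqP/matrixP => i j.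
  by rewrite (ord1 j) mxE; apply/eqP/negPn.
case: (arg_maxP (fun j => Normc.normc (x j 0)) (isT : xpredT i)) => i0 _ maxi0.
have xmax j : `|x j 0| <= `|x i0 0| by rewrite complex.lecR; apply: maxi0.
have xi0_gt0 : 0 < `|x i0 0| by apply: lt_le_trans (xmax i); rewrite normr_gt0.
rewrite -(ltr_pM2r xi0_gt0) mul1r -normrM.
have -> : z * x i0 0 = (complexify A *m x) i0 0 by rewrite Ax mxE.
apply: le_lt_trans (norm_mulmx_le _ _ xmax) _.
  by move=> i1 j; rewrite mxE complex.lecR.
rewrite -{2}[`|x i0 0|]mulr1 ltr_pM2l //.
have -> : (complexify A *m (const_mx 1 : 'cV_N)) i0 0 = toC ((A *m ones) i0 0).
  by rewrite !mxE rmorph_sum; apply: eq_bigr => j _; rewrite !mxE rmorphM rmorph1.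
by rewrite complex.ltcR.
Qed.

Lemma spectral_radius_lt1_rowsumX (A : 'M[R]_N) K :
  nonneg_mx A -> (forall i, (A ^+ K *m ones) i 0 < 1) -> spectral_radius_lt1 A.
Proof.
move=> A0 AK1 z /eigenvalue_colP [x /(eigenvectorX K) Ax x0].
have : `|z| ^+ K < 1.
  rewrite -normrX; apply: eigenvalue_norm_lt1 (nonneg_mxX K A0) AK1 _.
  by apply/eigenvalue_colP; exists x; rewrite ?complexifyX.
by apply: contraTT; rewrite -!real_leNgt ?realX ?normr_real ?real1 // => /exprn_ege1->.
Qed.

Lemma trajectory_norm_le (A : 'M[R]_N) (e : nat -> 'cV[R]_N) K rho c :
  nonneg_mx A -> (forall i, (A *m ones) i 0 <= 1) ->
  (forall i, (A ^+ K *m ones) i 0 <= rho) -> 0 <= rho -> 0 <= c ->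
  (forall k, e k.+1 = A *m e k) -> (forall j, `|e 0%N j 0| <= c) ->
  forall m k j, (m * K <= k)%N -> `|e k j 0| <= rho ^+ m * c.
Proof.
move=> A0 A1 AK rho0 c0 eS e0c.
have contract (B : 'M[R]_N) d b (y : 'cV[R]_N) j : nonneg_mx B ->
    (forall i, (B *m ones) i 0 <= d) -> 0 <= b -> (forall i, `|y i 0| <= b) ->
    `|(B *m y) j 0| <= d * b.
  move=> B0 Bd b0 yb; rewrite [d * b]mulrC.
  by apply: le_trans (norm_mulmx_le _ B0 yb) _; apply: ler_wpM2l.
have bound_stable k b : 0 <= b -> (forall j, `|e k j 0| <= b) ->
    forall d j, `|e (d + k)%N j 0| <= b.
  move=> b0 ekb; elim=> [|d IHd] j //.
  by rewrite addSn eS -[b]mul1r; apply: contract A0 A1 b0 IHd.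
have eD k d : e (d + k)%N = A ^+ d *m e k.
  elim: d => [|d IHd]; first by rewrite add0n expr0 mul1mx.
  by rewrite addSn eS IHd -exprS_mulmx.
elim=> [|m IHm] k j.
  by rewrite expr0 mul1r -[k]addn0 => _; apply: bound_stable.
rewrite mulSn => /subnK <-; apply: bound_stable => [|i].
  by rewrite mulr_ge0 ?exprn_ge0.
rewrite eD exprS -mulrA; apply: contract (nonneg_mxX K A0) AK _ (IHm _ ^~ (leqnn _)).
by rewrite mulr_ge0 ?exprn_ge0.
Qed.

Lemma trajectory_cvg0 (A : 'M[R]_N) (e : nat -> 'cV[R]_N) K :
  nonneg_mx A -> (forall i, (A *m ones) i 0 <= 1) ->
  (forall i, (A ^+ K *m ones) i 0 < 1) -> (forall k, e k.+1 = A *m e k) ->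
  forall i, (fun k => e k i 0) @ \oo --> 0.
Proof.
move=> A0 A1 AK1 eS i.
case: (arg_maxP (fun j => (A ^+ K *m ones) j 0) (isT : xpredT i)) => i1 _ maxi1.
set rho := (A ^+ K *m ones) i1 0 in maxi1.
have rho0 : 0 <= rho.
  by rewrite /rho mxE sumr_ge0 // => j _; rewrite mxE mulr1 (nonneg_mxX K A0).
set c := \sum_j `|e 0%N j 0|.
have c0 : 0 <= c by rewrite sumr_ge0.
have e0c j : `|e 0%N j 0| <= c by rewrite /c (bigD1 j) //= lerDl sumr_ge0.
have /cvgrPdist_le geo : (fun m => rho ^+ m * c) @ \oo --> 0.
  by rewrite -(mul0r c); apply: cvgMl; apply: cvg_expr; rewrite ger0_norm ?AK1.
apply/cvgrPdist_le => eps eps0; have [m _ rho_m] := geo eps eps0.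
near=> k; rewrite sub0r normrN.
apply: le_trans (trajectory_norm_le A0 A1 (fun j => maxi1 j isT) rho0 c0 eS e0c
  (m := m) (k := k) i _) _.
  by near: k; apply: nbhs_infty_ge.
by have := rho_m m (leqnn m); rewrite sub0r normrN ger0_norm // mulr_ge0 ?exprn_ge0.
Unshelve. all: by end_near.
Qed.

Lemma affine_trajectory_cvg (A : 'M[R]_N) (v xe : 'cV[R]_N) (x : nat -> 'cV[R]_N) K :
  nonneg_mx A -> (forall i, (A *m ones) i 0 <= 1) ->
  (forall i, (A ^+ K *m ones) i 0 < 1) ->
  xe = A *m xe + v -> (forall k, x k.+1 = A *m x k + v) ->
  forall i, (fun k => x k i 0) @ \oo --> xe i 0.
Proof.
move=> A0 A1 AK1 xeE xS i; apply/subr_cvg0.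
have eS k : x k.+1 - xe = A *m (x k - xe).
  by rewrite xS {1}xeE mulmxBr opprD addrACA subrr addr0.
have := trajectory_cvg0 A0 A1 AK1 eS i.
by under eq_fun do rewrite !mxE.
Qed.

End NonnegativeMatrices.

Section FriedkinJohnsen.
Variables (R : realType) (n : nat) (Lam W : 'M[R]_n).
Hypotheses (Lam_diag : is_diag_mx Lam) (Lam01 : forall i, 0 <= Lam i i <= 1).
Hypotheses (W0 : nonneg_mx W) (W_stoch : forall i, \sum_j W i j = 1).
Local Notation A := (Lam *m W).
Local Notation ones := (const_mx 1 : 'cV[R]_n).

Lemma FJ_nonneg : nonneg_mx A.
Proof. by move=> i j; rewrite diag_mulmxE // mulr_ge0 //; case/andP: (Lam01 i). Qed.

Lemma FJ_mulmxE (v : 'cV[R]_n) i : (A *m v) i 0 = Lam i i * \sum_j W i j * v j 0.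
Proof. by rewrite -mulmxA diag_mulmxE // mxE. Qed.

Lemma stochastic_avg_ge0_le1 (v : 'cV[R]_n) i :
  (forall j, 0 <= v j 0 <= 1) -> 0 <= \sum_j W i j * v j 0 <= 1.
Proof.
move=> v01; rewrite sumr_ge0 => [|j _]; last by rewrite mulr_ge0 //; case/andP: (v01 j).
rewrite -(W_stoch i) ler_sum // => j _.
by rewrite ler_piMr //; case/andP: (v01 j).
Qed.

Lemma stochastic_avg_lt1 (v : 'cV[R]_n) i j :
  (forall k, 0 <= v k 0 <= 1) -> 0 < W i j -> v j 0 < 1 -> \sum_k W i k * v k 0 < 1.
Proof.
move=> v01 Wij vj; rewrite -(W_stoch i) (bigD1 j) // [ltRHS](bigD1 j) //=.
apply: ltr_leD; first by rewrite gtr_pMr.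
by apply: ler_sum => k _; rewrite ler_piMr //; case/andP: (v01 k).
Qed.

Lemma FJ_rowsumX_ge0_le1 k i : 0 <= (A ^+ k *m ones) i 0 <= 1.
Proof.
elim: k i => [|k IHk] i; first by rewrite expr0 mul1mx mxE ler01 lexx.
rewrite exprS_mulmx FJ_mulmxE.
have /andP [s0 s1] := stochastic_avg_ge0_le1 i IHk; case/andP: (Lam01 i) => L0 L1.
by rewrite mulr_ge0 // mulr_ile1.
Qed.

Lemma FJ_rowsum_le1 i : (A *m ones) i 0 <= 1.
Proof. by have /andP [] := FJ_rowsumX_ge0_le1 1 i; rewrite expr1. Qed.

Lemma FJ_rowsumSX_le k i : (A ^+ k.+1 *m ones) i 0 <= (A ^+ k *m ones) i 0.
Proof.
elim: k i => [|k IHk] i; first by rewrite expr1 expr0 mul1mx [leRHS]mxE FJ_rowsum_le1.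
by rewrite exprS_mulmx [in leRHS]exprS_mulmx; apply: nonneg_mulmx_le FJ_nonneg IHk.
Qed.

Lemma FJ_rowsumX_lt1_path i p :
  path (graph_edge W) i p -> Lam (last i p) (last i p) < 1 ->
  forall m, (size p < m)%N -> (A ^+ m *m ones) i 0 < 1.
Proof.
elim: p i => [|j p IHp] i /= => [_ Li|/andP [Wij pj] Llast] [|m] // m_gt;
  rewrite exprS_mulmx FJ_mulmxE; case/andP: (Lam01 i) => L0 L1.
  have /andP [_ s1] := stochastic_avg_ge0_le1 i (FJ_rowsumX_ge0_le1 m).
  by apply: le_lt_trans Li; rewrite -[leRHS]mulr1 ler_wpM2l.
have s_lt1 := stochastic_avg_lt1 (FJ_rowsumX_ge0_le1 m) Wij (IHp j pj Llast m m_gt).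
have /andP [s0 _] := stochastic_avg_ge0_le1 i (FJ_rowsumX_ge0_le1 m).
by apply: le_lt_trans s_lt1; rewrite ler_piMl.
Qed.

Lemma FJ_rowsumX_lt1 : globally_reachable W (fun i => Lam i i < 1) ->
  exists K, forall i, (A ^+ K *m ones) i 0 < 1.
Proof.
move=> reach; have /fin_all_exists [k kP] :
    forall i, exists k, forall m, (k < m)%N -> (A ^+ m *m ones) i 0 < 1.
  move=> i; have [j Lj /connectP [p pP jE]] := reach i.
  by exists (size p); apply: FJ_rowsumX_lt1_path; rewrite -?jE.
by exists (\max_i k i).+1 => i; apply: kP; rewrite ltnS leq_bigmax.
Qed.

(* Restricting the rows of A to a closed class C gives a matrix P with P 1_C = 1_C;
   a left fixed vector of P vanishes off C and is then fixed by A itself. *)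
Lemma closed_class_fixed_row (C : pred 'I_n) i0 :
  C i0 -> (forall i j, C i -> 0 < W i j -> C j) -> (forall i, C i -> Lam i i = 1) ->
  exists2 q : 'rV[R]_n, q *m A = q & q != 0.
Proof.
move=> Ci0 C_closed C_Lam.
have A_out i j : C i -> ~~ C j -> A i j = 0.
  move=> Ci Cj; rewrite diag_mulmxE //; suff -> : W i j = 0 by rewrite mulr0.
  by apply/eqP; rewrite eq_le W0 andbT leNgt; apply: contra Cj; apply: C_closed.
pose P := \matrix_(i, j) ((C i)%:R * A i j).
pose y : 'cV[R]_n := \col_j (C j)%:R.
have Py : P *m y = 1 *: y.
  apply/matrixP => i k; rewrite (ord1 k) scale1r !mxE.
  case Ci: (C i); last by rewrite big1 // => j _; rewrite mxE Ci !mul0r.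
  transitivity (\sum_j A i j).
    apply: eq_bigr => j _; rewrite [P i j]mxE [y j 0]mxE Ci mul1r.
    by case Cj: (C j); rewrite ?mulr1 // A_out ?Cj ?mul0r.
  rewrite -(W_stoch i) -[RHS]mul1r -(C_Lam _ Ci) mulr_sumr.
  by apply: eq_bigr => j _; rewrite diag_mulmxE.
have y0 : y != 0.
  by apply/eqP => /matrixP /(_ i0 0); rewrite !mxE Ci0 => /eqP; rewrite oner_eq0.
have /eigenvalueP [q qP q0] : eigenvalue P 1 by apply/eigenvalue_colP; exists y.
rewrite scale1r in qP.
have q_out j : ~~ C j -> q 0 j = 0.
  move=> Cj; rewrite -qP mxE big1 // => i _; rewrite mxE.
  by case Ci: (C i); [rewrite A_out ?Ci // !mulr0 | rewrite !mul0r mulr0].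
exists q => //; apply/rowP => j; rewrite -[in RHS]qP [LHS]mxE [RHS]mxE.
apply: eq_bigr => i _; rewrite [P i j]mxE.
by case Ci: (C i); rewrite ?mul1r // q_out ?Ci // !mul0r.
Qed.

Lemma FJ_fixed_row : ~ globally_reachable W (fun i => Lam i i < 1) ->
  exists2 q : 'rV[R]_n, q *m A = q & q != 0.
Proof.
move=> unreach.
have [i0 i0P] : exists i0, ~ exists2 j, Lam j j < 1 & connect (graph_edge W) i0 j.
  by apply/existsNP.
apply: (@closed_class_fixed_row (connect (graph_edge W) i0) i0 (connect0 _ _)).
  by move=> i j i0i Wij; apply: connect_trans i0i (connect1 Wij).
move=> i i0i; apply/eqP; rewrite eq_le; case/andP: (Lam01 i) => _ ->.
by rewrite leNgt; apply/negP => Li; apply: i0P; exists i.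
Qed.

Lemma FJ_spectral_radius_lt1E :
  spectral_radius_lt1 A <-> globally_reachable W (fun i => Lam i i < 1).
Proof.
split=> [rhoA | reach].
  apply: contrapT => /FJ_fixed_row [q qA q0].
  apply: (negP (spectral_radius_lt1_eigenvalue1 rhoA)).
  by apply/eigenvalueP; exists q; rewrite ?scale1r.
have [K AK] := FJ_rowsumX_lt1 reach.
exact: spectral_radius_lt1_rowsumX FJ_nonneg AK.
Qed.

End FriedkinJohnsen.

Section FriedkinJohnsenMemory.
Variables (R : realType) (n : nat) (Lam W1 W2 : 'M[R]_n).
Hypotheses (Lam_diag : is_diag_mx Lam) (Lam01 : forall i, 0 <= Lam i i <= 1).
Hypotheses (W1_0 : nonneg_mx W1) (W2_0 : nonneg_mx W2).
Hypothesis W_stoch : forall i, \sum_j (W1 + W2) i j = 1.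
Local Notation A := (Lam *m (W1 + W2)).
Local Notation Ad := (FJMM_mx Lam W1 W2).
Local Notation ones N := (const_mx 1 : 'cV[R]_N).

Let W_0 : nonneg_mx (W1 + W2) := nonneg_mxD W1_0 W2_0.

Lemma FJMM_mul_col (a b : 'cV[R]_n) :
  Ad *m col_mx a b = col_mx b (Lam *m W2 *m a + Lam *m W1 *m b).
Proof. by rewrite /FJMM_mx mul_block_col !mul0mx mul1mx add0r. Qed.

Lemma FJ_mulmx_split (q : 'cV[R]_n) : Lam *m W2 *m q + Lam *m W1 *m q = A *m q.
Proof. by rewrite -mulmxDl -mulmxDr addrC. Qed.

Lemma FJMM_trajectory (y : nat -> 'cV[R]_n) (u : 'cV[R]_n) :
  (forall k, y k.+2 = Lam *m (W1 *m y k.+1 + W2 *m y k) + u) ->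
  forall k, col_mx (y k.+1) (y k.+2) = Ad *m col_mx (y k) (y k.+1) + col_mx 0 u.
Proof.
move=> yS k; rewrite FJMM_mul_col add_col_mx addr0 yS.
by rewrite mulmxDr !mulmxA [Lam *m W1 *m _ + _]addrC.
Qed.

Lemma FJMM_nonneg : nonneg_mx Ad.
Proof.
move=> i j; rewrite /FJMM_mx.
case: (split_ordP i) => i1 ->; case: (split_ordP j) => j1 ->.
- by rewrite block_mxEul mxE.
- by rewrite block_mxEur mxE ler0n.
- by rewrite block_mxEdl; apply: FJ_nonneg.
- by rewrite block_mxEdr; apply: FJ_nonneg.
Qed.

Lemma FJMM_rowsum_le1 i : (Ad *m ones (n + n)) i 0 <= 1.
Proof.
rewrite -col_mx_const FJMM_mul_col FJ_mulmx_split.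
case: (split_ordP i) => j ->; first by rewrite col_mxEu mxE.
by rewrite col_mxEd; apply: FJ_rowsum_le1.
Qed.

Lemma FJMM_rowsumX_le k i :
  (Ad ^+ (2 * k) *m ones (n + n)) i 0 <= col_mx (A ^+ k *m ones n) (A ^+ k *m ones n) i 0.
Proof.
elim: k i => [|k IHk] i; first by rewrite muln0 !expr0 !mul1mx col_mx_const.
rewrite mulnS exprD -mulmxE -mulmxA.
apply: le_trans (nonneg_mulmx_le _ (nonneg_mxX 2 FJMM_nonneg) IHk) _.
rewrite expr2 -mulmxE -mulmxA !FJMM_mul_col FJ_mulmx_split !exprS_mulmx.
apply: col_mx_le => j //; rewrite -[in leRHS]FJ_mulmx_split [leLHS]mxE [leRHS]mxE lerD2l.
apply: nonneg_mulmx_le => [|l]; first exact: FJ_nonneg.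
by rewrite -exprS_mulmx; apply: (FJ_rowsumSX_le Lam_diag Lam01 W_0 W_stoch).
Qed.

Lemma FJMM_rowsumX_lt1 K : (forall i, (A ^+ K *m ones n) i 0 < 1) ->
  forall i, (Ad ^+ (2 * K) *m ones (n + n)) i 0 < 1.
Proof.
move=> AK i; apply: le_lt_trans (FJMM_rowsumX_le K i) _.
by case: (split_ordP i) => j ->; rewrite ?col_mxEu ?col_mxEd.
Qed.

Lemma FJMM_eigenvalue1 (q : 'rV[R]_n) : q *m A = q -> q != 0 -> eigenvalue Ad 1.
Proof.
move=> qA q0; apply/eigenvalueP; exists (row_mx (q *m (Lam *m W2)) q).
  rewrite scale1r /FJMM_mx mul_row_block !mulmx0 add0r mulmx1 -mulmxDr.
  by rewrite -mulmxDr addrC qA.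
by rewrite row_mx_eq0 negb_and q0 orbT.
Qed.

Lemma FJMM_spectral_radius_lt1E :
  spectral_radius_lt1 Ad <-> globally_reachable (W1 + W2) (fun i => Lam i i < 1).
Proof.
split=> [rhoAd | reach].
  apply: contrapT => /(FJ_fixed_row Lam_diag Lam01 W_0 W_stoch) [q qA q0].
  exact: (negP (spectral_radius_lt1_eigenvalue1 rhoAd)) (FJMM_eigenvalue1 qA q0).
have [K AK] := FJ_rowsumX_lt1 Lam_diag Lam01 W_0 W_stoch reach.
exact: spectral_radius_lt1_rowsumX FJMM_nonneg (FJMM_rowsumX_lt1 AK).
Qed.

End FriedkinJohnsenMemory.

Theorem theorem1 (R : realType) (n : nat) (Lam W1 W2 : 'M[R]_n) (s : 'cV[R]_n) :
  (0 < n)%N ->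
  is_diag_mx Lam ->
  (forall i, 0 <= Lam i i <= 1) ->
  nonneg_mx W1 -> nonneg_mx W2 ->
  row_stochastic (W1 + W2) ->
  let Abar := Lam *m (W1 + W2) in
  let u := (1%:M - Lam) *m s in
  let xbar := invmx (1%:M - Abar) *m u in
  ((spectral_radius_lt1 (FJMM_mx Lam W1 W2) <-> spectral_radius_lt1 Abar) /\
   (spectral_radius_lt1 Abar <->
      ((exists i, Lam i i < 1) /\
       globally_reachable (W1 + W2) (fun i => Lam i i < 1)))) /\
  (spectral_radius_lt1 Abar ->
     (1%:M - Abar) \in unitmx /\
     (* y k = x(k-1), so y 0 = x(-1), y 1 = x(0) *)
     (forall y : nat -> 'cV[R]_n,
        (forall k, y k.+2 = Lam *m (W1 *m y k.+1 + W2 *m y k) + u) ->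
        forall i, (fun k => y k i ord0) @ \oo --> xbar i ord0) /\
     (forall x : nat -> 'cV[R]_n,
        (forall k, x k.+1 = Abar *m x k + u) ->
        forall i, (fun k => x k i ord0) @ \oo --> xbar i ord0) /\
     (forall z : 'cV[R]_n, z = Lam *m (W1 *m z + W2 *m z) + u <-> z = xbar) /\
     (forall z : 'cV[R]_n, z = Abar *m z + u <-> z = xbar)).
Proof.
move=> n_gt0 Lam_diag Lam01 W1_0 W2_0 [W_0 W_stoch] Abar u xbar.
have rhoA := FJ_spectral_radius_lt1E Lam_diag Lam01 W_0 W_stoch.
have rhoAd := FJMM_spectral_radius_lt1E Lam_diag Lam01 W1_0 W2_0 W_stoch.
split.
  split; first by rewrite rhoAd rhoA.
  rewrite rhoA; split=> [reach | [] //]; split=> //.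
  by have [j Lj _] := reach (Ordinal n_gt0); exists j.
move=> rho_lt1; have [K AK] := FJ_rowsumX_lt1 Lam_diag Lam01 W_0 W_stoch (proj1 rhoA rho_lt1).
have unitA := unitmx_1B (spectral_radius_lt1_eigenvalue1 rho_lt1).
have xbarE : xbar = Abar *m xbar + u by apply/affine_fixpointE.
split=> //; split; last split; last split.
- move=> y yS i.
  have := affine_trajectory_cvg (FJMM_nonneg Lam_diag Lam01 W1_0 W2_0)
    (FJMM_rowsum_le1 Lam_diag Lam01 W1_0 W2_0 W_stoch)
    (FJMM_rowsumX_lt1 Lam_diag Lam01 W1_0 W2_0 W_stoch AK)
    (xe := col_mx xbar xbar) _ (FJMM_trajectory yS) (i := lshift n i).
  rewrite col_mxEu; under eq_fun do rewrite col_mxEu; apply.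
  by rewrite FJMM_mul_col add_col_mx addr0 FJ_mulmx_split -xbarE.
- move=> x xS i; apply: (affine_trajectory_cvg (FJ_nonneg Lam_diag Lam01 W_0)
    (FJ_rowsum_le1 Lam_diag Lam01 W_0 W_stoch) AK xbarE xS).
- by move=> z; rewrite -mulmxDl mulmxA; apply: affine_fixpointE.
- by move=> z; apply: affine_fixpointE.
Qed.
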